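(* Let $R$ be a nonsignaling bipartite resource of type $\mathsf{T}[\mathcal{X}]\,\mathsf{C}\to\mathsf{T}[\mathcal{A}]\,\mathsf{C}$, i.e. Bob's input $\mathcal{Y}$ and output $\mathcal{B}$ are classical, while Alice's input $\mathcal{X}$ and output $\mathcal{A}$ are of arbitrary type, and let $n=d[\mathcal{Y}]$ be the cardinality of Bob's input system. Then $R$ admits an $n$-symmetric extension if and only if $R$ is LOSR-free.
   Context: Systems have a dimension and a type in $\{\mathsf{I},\mathsf{C},\mathsf{Q}\}$ (trivial = dimension 1, classical, quantum). A resource is a completely positive linear map $R$ from operators on $\mathcal{X}\otimes\mathcal{Y}$ to operators on $\mathcal{A}\otimes\mathcal{B}$, trace preserving on product inputs, nonsignaling in both directions ($\mathrm{tr}_{\mathcal{A}}R[\xi\otimes\psi]$ independent of $\xi$, $\mathrm{tr}_{\mathcal{B}}R[\xi\otimes\psi]$ independent of $\psi$), with classicality constraints: for a classical output such as $\mathcal{B}$, $\langle i|R[\cdot]|j\rangle_{\mathcal{B}}=0$ for $i\neq j$; for a classical input such as $\mathcal{Y}$, $R[\xi\otimes|i\rangle\langle j|]=0$ for $i\ne j$. It is LOSR-free if $R=\sum_ip_iR^i_{\mathcal{A}|\mathcal{X}}\otimes R^i_{\mathcal{B}|\mathcal{Y}}$ for a probability distribution and single-party channels of the same types. An $n$-symmetric extension of $R$ is an $(n+1)$-party resource with parties $\mathcal{A}|\mathcal{X},\mathcal{B}_1|\mathcal{Y}_1,\dots,\mathcal{B}_n|\mathcal{Y}_n$ (copies of $\mathcal{B}|\mathcal{Y}$,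 of the same types), nonsignaling from any party to any other, invariant under all joint permutations of the copies, and whose reduction obtained by tracing out $\mathcal{B}_2,\dots,\mathcal{B}_n$ equals $R$. *)

From HB Require Import structures.
From mathcomp Require Import all_boot all_order all_algebra.
From mathcomp Require Import fingroup perm complex.
From mathcomp Require Import reals.
Set Implicit Arguments. Unset Strict Implicit. Unset Printing Implicit Defensive.
Import Order.TTheory GRing.Theory Num.Theory.
Local Open Scope ring_scope.

(* system types: trivial, classical, quantum *)
Inductive systype := SysI | SysC | SysQ.

Section Defs.
Variable R : realType.
Local Notation C := R[i].

(* operators on the Hilbert space with orthonormal basis indexed by T *)
Definition op (T : finType) := T -> T -> C.

Definition mtrace (T : finType) (M : op T) : C := \sum_(t : T) M t t.

Definition psd (T : finType) (M : op T) : Prop :=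
  forall v : T -> C, 0 <= \sum_(s : T) \sum_(t : T) (v s)^* * M s t * v t.

Definition density (T : finType) (M : op T) : Prop := psd M /\ mtrace M = 1.

Definition linmap (I O : finType) (L : op I -> op O) : Prop :=
  forall (a : C) (x y : op I) (o o' : O),
    L (fun i j => a * x i j + y i j) o o' = a * L x o o' + L y o o'.

(* complete positivity: id_k (x) L preserves positivity for every k *)
Definition cp (I O : finType) (L : op I -> op O) : Prop :=
  forall (k : nat) (s : op ('I_k * I)%type), psd s ->
    psd (fun (p q : 'I_k * O) => L (fun i j => s (p.1, i) (q.1, j)) p.2 q.2).

(* classical output subsystem (selected by proj): off-diagonal blocks vanish *)
Definition cl_out (I O K : finType) (proj : O -> K) (L : op I -> op O) : Prop :=
  forall (rho : op I) (o o' : O), proj o != proj o' -> L rho o o' = 0.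

(* classical input subsystem (selected by proj): L[xi (x) |i><j|] = 0 for i<>j.
   The operators of the form xi (x) |i><j| are exactly those supported on the
   (i,j) block of that subsystem. *)
Definition cl_in (I O K : finType) (proj : I -> K) (L : op I -> op O) : Prop :=
  forall (i j : K), i != j ->
  forall rho : op I, (forall x x', rho x x' != 0 -> proj x = i /\ proj x' = j) ->
  forall o o', L rho o o' = 0.

Definition tensor_op (T U : finType) (x : op T) (y : op U) : op (T * U)%type :=
  fun p q => x p.1 q.1 * y p.2 q.2.

Definition ptr_fst (T U : finType) (M : op (T * U)%type) : op U :=
  fun u u' => \sum_(t : T) M (t, u) (t, u').
Definition ptr_snd (T U : finType) (M : op (T * U)%type) : op T :=
  fun t t' => \sum_(u : U) M (t, u) (t', u).

Definition resource (dX dY dA dB : nat) (tX tY tA tB : systype)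
    (L : op ('I_dX * 'I_dY)%type -> op ('I_dA * 'I_dB)%type) : Prop :=
  linmap L /\ cp L /\
  (forall xi psi, density xi -> density psi ->
      mtrace (L (tensor_op xi psi)) = 1) /\
  (forall xi xi' psi, density xi -> density xi' -> density psi ->
      ptr_fst (L (tensor_op xi psi)) =2 ptr_fst (L (tensor_op xi' psi))) /\
  (forall xi psi psi', density xi -> density psi -> density psi' ->
      ptr_snd (L (tensor_op xi psi)) =2 ptr_snd (L (tensor_op xi psi'))) /\
  (tX = SysC -> cl_in fst L) /\ (tY = SysC -> cl_in snd L) /\
  (tA = SysC -> cl_out fst L) /\ (tB = SysC -> cl_out snd L).

Definition channel (dI dO : nat) (tI tO : systype)
    (L : op 'I_dI -> op 'I_dO) : Prop :=
  linmap L /\ cp L /\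
  (forall rho, density rho -> mtrace (L rho) = 1) /\
  (tI = SysC -> cl_in id L) /\ (tO = SysC -> cl_out id L).

(* tensor product of two maps, extended linearly to all operators *)
Definition tensor_map (I1 I2 O1 O2 : finType)
    (L1 : op I1 -> op O1) (L2 : op I2 -> op O2) : op (I1 * I2)%type -> op (O1 * O2)%type :=
  fun rho o o' => \sum_(y : I2) \sum_(y' : I2)
     L1 (fun x x' => rho (x, y) (x', y')) o.1 o'.1 *
     L2 (fun u u' => (u == y)%:R * (u' == y')%:R) o.2 o'.2.

Definition losr_free (dX dY dA dB : nat) (tX tY tA tB : systype)
    (L : op ('I_dX * 'I_dY)%type -> op ('I_dA * 'I_dB)%type) : Prop :=
  exists (m : nat) (p : 'I_m -> C)
         (RA : 'I_m -> op 'I_dX -> op 'I_dA) (RB : 'I_m -> op 'I_dY -> op 'I_dB),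
    (forall i, 0 <= p i) /\ \sum_(i < m) p i = 1 /\
    (forall i, channel tX tA (RA i)) /\ (forall i, channel tY tB (RB i)) /\
    (forall rho o o', L rho o o' = \sum_(i < m) p i * tensor_map (RA i) (RB i) rho o o').

(* ---- (n+1)-party extensions: parties A|X, B_1|Y_1, ..., B_n|Y_n ----
   Joint input index: (x, f) with f k the index of Y_k; similarly outputs. *)

Definition prod_in (n : nat) (T U : finType) (xi : op T) (psi : 'I_n -> op U) :
    op (T * {ffun 'I_n -> U})%type :=
  fun x x' => xi x.1 x'.1 * \prod_(k < n) psi k (x.2 k) (x'.2 k).

(* Partial trace over the outputs of the parties NOT kept (Alice kept iff ka,
   copy k kept iff k \in K), represented on full indices (depends only on the
   kept coordinates). *)
Definition mix (n : nat) (T U : finType) (ka : bool) (K : {set 'I_n})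
    (o w : T * {ffun 'I_n -> U}) : T * {ffun 'I_n -> U} :=
  (if ka then o.1 else w.1, [ffun k => if k \in K then o.2 k else w.2 k]).

Definition red (n : nat) (T U : finType) (ka : bool) (K : {set 'I_n})
    (M : op (T * {ffun 'I_n -> U})%type) : op (T * {ffun 'I_n -> U})%type :=
  fun o o' => \sum_(w : T * {ffun 'I_n -> U}
                    | (ka ==> (w.1 == o.1)) && [forall k in K, w.2 k == o.2 k])
                M (mix ka K o w) (mix ka K o' w).

Definition pidx (n : nat) (T U : finType) (s : {perm 'I_n})
    (x : T * {ffun 'I_n -> U}) : T * {ffun 'I_n -> U} :=
  (x.1, [ffun k => x.2 (s k)]).

Definition upd (n : nat) (U : finType) (g : {ffun 'I_n -> U}) (k0 : 'I_n) (b : U) :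
    {ffun 'I_n -> U} := [ffun k => if k == k0 then b else g k].

Definition ext_in (n : nat) (T U : finType) (k0 : 'I_n) (rho : op (T * U)%type)
    (psi : 'I_n -> op U) : op (T * {ffun 'I_n -> U})%type :=
  fun x x' => rho (x.1, x.2 k0) (x'.1, x'.2 k0) *
              \prod_(k < n | k != k0) psi k (x.2 k) (x'.2 k).

(* E is an n-symmetric extension of L, where copy k0 plays the role of B_1 *)
Definition sym_ext (dX dY dA dB : nat) (tX tY tA tB : systype) (n : nat) (k0 : 'I_n)
    (L : op ('I_dX * 'I_dY)%type -> op ('I_dA * 'I_dB)%type)
    (E : op ('I_dX * {ffun 'I_n -> 'I_dY})%type -> op ('I_dA * {ffun 'I_n -> 'I_dB})%type) : Prop :=
  linmap E /\ cp E /\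
  (forall xi psi, density xi -> (forall k, density (psi k)) ->
      mtrace (E (prod_in xi psi)) = 1) /\
  (* nonsignaling: the marginal of any set of parties is independent of the
     inputs of the other parties *)
  (forall (ka : bool) (K : {set 'I_n}) xi xi' psi psi',
      density xi -> density xi' -> (forall k, density (psi k)) ->
      (forall k, density (psi' k)) ->
      (ka -> xi =2 xi') -> (forall k, k \in K -> psi k =2 psi' k) ->
      red ka K (E (prod_in xi psi)) =2 red ka K (E (prod_in xi' psi'))) /\
  (forall (s : {perm 'I_n}) rho o o',
      E (fun x x' => rho (pidx s x) (pidx s x')) o o' = E rho (pidx s o) (pidx s o')) /\
  (tX = SysC -> cl_in fst E) /\ (tA = SysC -> cl_out fst E) /\
  (forall k : 'I_n, tY = SysC -> cl_in (fun x : ('I_dX * {ffun 'I_n -> 'I_dY})%type => x.2 k) E) /\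
  (forall k : 'I_n, tB = SysC -> cl_out (fun o : ('I_dA * {ffun 'I_n -> 'I_dB})%type => o.2 k) E) /\
  (* tracing out all copies B_k, k <> k0, gives back L *)
  (forall (rho : op ('I_dX * 'I_dY)%type) (psi : 'I_n -> op 'I_dY),
      (forall k, k != k0 -> density (psi k)) ->
      forall o o' : 'I_dA * 'I_dB,
        \sum_(g : {ffun 'I_n -> 'I_dB} | g k0 == o.2)
           E (ext_in k0 rho psi) (o.1, g) (o'.1, upd g k0 o'.2) = L rho o o').

Definition has_sym_ext (dX dY dA dB : nat) (tX tY tA tB : systype) (n : nat) (k0 : 'I_n)
    (L : op ('I_dX * 'I_dY)%type -> op ('I_dA * 'I_dB)%type) : Prop :=
  exists E, @sym_ext dX dY dA dB tX tY tA tB n k0 L E.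

End Defs.

(* Suppose R has an n-symmetric extension E, where n = d[Y].  Give Alice any input and copy k
   of Bob the classical input k.  The joint outcome g : 'I_n -> 'I_dB of the copies is a random
   response function of Bob; by nonsignaling its probability P(g) does not depend on Alice's
   input, and conditioning on it leaves Alice with a channel R^g_A.  Relabelling the copies by the
   transposition (k0 y), permutation invariance identifies R on Bob's input y with the reduction
   of E in which copy k0 receives y, whence R = sum_g P(g) R^g_A (x) (y |-> g y), which is
   LOSR-free.  Conversely, if R = sum_i p_i R^i_A (x) R^i_B, letting every copy of Bob apply R^i_B
   independently in branch i gives a nonsignaling, permutation-invariant extension. *)

From HB Require Import structures.
From mathcomp Require Import all_boot all_order all_algebra.
From mathcomp Require Import fingroup perm complex reals ring.
From mathcomp Require boolp.
Set Implicit Arguments. Unset Strict Implicit. Unset Printing Implicit Defensive.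
Import Order.TTheory GRing.Theory Num.Theory.
Local Open Scope ring_scope.

Section Operators.
Variable R : realType.
Local Notation C := R[i].

Lemma op_ext (T : finType) (x y : op R T) : x =2 y -> x = y.
Proof. by move=> xy; apply/boolp.funext => a; apply/boolp.funext => b; exact: xy. Qed.

Lemma opmap_ext (I O : finType) (L : op R I -> op R O) (x y : op R I) o o' :
  x =2 y -> L x o o' = L y o o'.
Proof. by move=> /op_ext ->. Qed.

Definition ketbra (T : finType) (y y' : T) : op R T :=
  fun u u' => (u == y)%:R * (u' == y')%:R.

Lemma sum_deltal (T : finType) (a : T) (F : T -> C) :
  \sum_(y : T) (a == y)%:R * F y = F a.
Proof.
rewrite (bigD1 a) //= big1 ?addr0; first by rewrite eqxx mul1r.
by move=> y; rewrite eq_sym => /negPf ->; rewrite mul0r.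
Qed.

Lemma sum_deltar (T : finType) (a : T) (F : T -> C) :
  \sum_(y : T) (y == a)%:R * F y = F a.
Proof. by rewrite -(sum_deltal a); apply: eq_bigr => y _; rewrite eq_sym. Qed.

Lemma prod_delta (I T : finType) (f g : {ffun I -> T}) :
  \prod_(k : I) ((f k == g k)%:R : C) = (f == g)%:R.
Proof.
have [->|nfg] := eqVneq f g; first by apply: big1 => k _; rewrite eqxx.
have [k fgk] : exists k, f k != g k.
  by apply/existsP; apply: contraNT nfg; rewrite negb_exists => /forallP fg;
     apply/eqP/ffunP => k; apply/eqP; rewrite -[_ == _]negbK fg.
by rewrite (bigD1 k) //= (negPf fgk) mul0r.
Qed.

Lemma sum_ffun_prod_except (I J : finType) (i0 : I) (X : J -> C) (Y : I -> J -> C) :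
  (forall i, i != i0 -> \sum_(j : J) Y i j = 1) ->
  \sum_(g : {ffun I -> J}) X (g i0) * \prod_(i | i != i0) Y i (g i) = \sum_(j : J) X j.
Proof.
move=> Y1; pose G i j := if i == i0 then X j else Y i j.
transitivity (\sum_(g : {ffun I -> J}) \prod_i G i (g i)).
  by apply: eq_bigr => g _; rewrite [RHS](bigD1 i0) //= /G eqxx; congr (_ * _);
     apply: eq_bigr => i /negPf ->.
rewrite -bigA_distr_bigA (bigD1 i0) //= [X in _ * X]big1 ?mulr1 => [|i ni0].
  by apply: eq_bigr => j _; rewrite /G eqxx.
by rewrite -(Y1 i ni0); apply: eq_bigr => j _; rewrite /G (negPf ni0).
Qed.

Lemma op_ketbra_expand (T : finType) (x : op R T) :
  x =2 (fun i j => \sum_(k : T) \sum_(l : T) x k l * ketbra k l i j).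
Proof.
move=> i j; have e k l : x k l * ketbra k l i j = (k == i)%:R * ((l == j)%:R * x k l).
  by rewrite /ketbra [i == k]eq_sym [j == l]eq_sym; ring.
under eq_bigr => k _ do under eq_bigr => l _ do rewrite e.
by under eq_bigr => k _ do rewrite -mulr_sumr sum_deltar; rewrite sum_deltar.
Qed.

Section LinearMap.
Variables (I O : finType) (L : op R I -> op R O).
Hypothesis linL : linmap L.

Lemma linmap0 o o' : L (fun _ _ => 0) o o' = 0.
Proof.
have := linL 1 (fun _ _ => 0) (fun _ _ => 0) o o'.
rewrite (@opmap_ext _ _ L _ (fun _ _ => 0)) => [|? ?]; last by rewrite mulr0 addr0.
by rewrite mul1r => /eqP; rewrite -subr_eq subrr eq_sym => /eqP.
Qed.

Lemma linmapD (x y : op R I) o o' :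
  L (fun i j => x i j + y i j) o o' = L x o o' + L y o o'.
Proof. by rewrite -[L x o o']mul1r -linL; apply: opmap_ext => ? ?; rewrite mul1r. Qed.

Lemma linmapZ a (x : op R I) o o' : L (fun i j => a * x i j) o o' = a * L x o o'.
Proof.
rewrite -[RHS]addr0 -(linmap0 o o') -linL.
by apply: opmap_ext => ? ?; rewrite addr0.
Qed.

Lemma linmap_sum (J : Type) (r : seq J) (P : pred J) (f : J -> op R I) o o' :
  L (fun i j => \sum_(k <- r | P k) f k i j) o o' = \sum_(k <- r | P k) L (f k) o o'.
Proof.
elim: r => [|k r IH].
  by rewrite big_nil -[RHS](linmap0 o o'); apply: opmap_ext => ? ?; rewrite big_nil.
rewrite big_cons; case: ifP => Pk; rewrite -IH ?Pk -?linmapD;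
  by apply: opmap_ext => ? ?; rewrite big_cons Pk.
Qed.

Lemma linmap_ketbra_expand (x : op R I) o o' :
  L x o o' = \sum_(k : I) \sum_(l : I) x k l * L (ketbra k l) o o'.
Proof.
rewrite {1}(op_ext (op_ketbra_expand x)) linmap_sum; apply: eq_bigr => k _.
by rewrite linmap_sum; apply: eq_bigr => l _; rewrite linmapZ.
Qed.

End LinearMap.

Lemma offblock_diag0 (T K : finType) (proj : T -> K) (i j : K) (rho : op R T) :
  i != j -> (forall x x', rho x x' != 0 -> proj x = i /\ proj x' = j) ->
  forall x x', proj x = proj x' -> rho x x' = 0.
Proof.
move=> nij supp x x' e; apply/eqP; apply: contraTT nij => /supp [<- <-].
by rewrite e negbK.
Qed.

Lemma cl_in_diag_blocks (I O K : finType) (proj : I -> K) (L : op R I -> op R O) :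
  linmap L -> cl_in proj L -> forall rho o o',
  L rho o o' = \sum_(y : K) L (fun p q => (proj p == y)%:R * (proj q == y)%:R * rho p q) o o'.
Proof.
move=> linL clL rho o o'.
pose blk y y' := fun p q => (proj p == y)%:R * (proj q == y')%:R * rho p q.
transitivity (L (fun p q => \sum_(y : K) \sum_(y' : K) blk y y' p q) o o').
  apply: opmap_ext => p q; rewrite /blk.
  under eq_bigr => y _ do under eq_bigr => y' _ do rewrite -mulrA.
  by under eq_bigr => y _ do rewrite -mulr_sumr sum_deltal; rewrite sum_deltal.
rewrite linmap_sum //; apply: eq_bigr => y _.
rewrite linmap_sum // (bigD1 y) //= big1 ?addr0 // => y' ny.
apply: (clL y y'); first by rewrite eq_sym.
move=> p q; rewrite /blk; have [->|] := eqVneq (proj p) y; last by rewrite !mul0r eqxx.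
by have [->|] := eqVneq (proj q) y'; last by rewrite mulr0 mul0r eqxx.
Qed.

Lemma red_trace_alice (n : nat) (T U : finType) (M : op R (T * {ffun 'I_n -> U})%type) o o' :
  red false setT M o o' = \sum_(a : T) M (a, o.2) (a, o'.2).
Proof.
have mixT (v w : T * {ffun 'I_n -> U}) : mix false setT v w = (w.1, v.2).
  by congr (_, _); apply/ffunP => k; rewrite ffunE in_setT.
transitivity (\sum_(w | xpredT w.1 && (w.2 == o.2)) M (w.1, o.2) (w.1, o'.2)).
  apply: eq_big => [w|w _]; last by rewrite !mixT.
  apply/forallP/eqP => [wo|-> k]; last by rewrite in_setT eqxx.
  by apply/ffunP => k; move: (wo k); rewrite in_setT => /eqP.
rewrite -(pair_big_dep xpredT (fun _ g => g == o.2) (fun a _ => M (a, o.2) (a, o'.2))).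
by apply: eq_bigr => a _; rewrite big_pred1_eq.
Qed.

Lemma upd_eq (n : nat) (U : finType) (g : {ffun 'I_n -> U}) k b b' :
  g k = b -> (g == upd g k b') = (b == b').
Proof.
move=> gk; apply/eqP/eqP => [/ffunP/(_ k)|<-]; first by rewrite ffunE eqxx gk.
by apply/ffunP => j; rewrite ffunE; case: eqP => // ->.
Qed.

(** * Positive semidefinite operators *)

Lemma psd_ext (T : finType) (M N : op R T) : M =2 N -> psd M -> psd N.
Proof. by move=> /op_ext ->. Qed.

Lemma sum_fibers (A B : finType) (h : A -> B) (G : A -> B -> C) :
  \sum_(s : B) \sum_(p : A | h p == s) G p s = \sum_(p : A) G p (h p).
Proof.
rewrite (exchange_big_dep xpredT) //=; apply: eq_bigr => p _.
by rewrite (big_pred1 (h p)) // => s; rewrite eq_sym.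
Qed.

Lemma psd_pullback (T U : finType) (M : op R T) (h : U -> T) (c : U -> C) :
  psd M -> psd (fun p q => (c p)^* * M (h p) (h q) * c q).
Proof.
move=> psdM v; set w := fun s => \sum_(p : U | h p == s) c p * v p.
have := psdM w; congr (0 <= _).
have fibers s t : (w s)^* * M s t * w t =
    \sum_(p | h p == s) \sum_(q | h q == t) (c p * v p)^* * M s t * (c q * v q).
  rewrite /w rmorph_sum !mulr_suml; apply: eq_bigr => p _; exact: mulr_sumr.
under eq_bigr => s _ do under eq_bigr => t _ do rewrite fibers.
under eq_bigr => s _ do rewrite exchange_big /=.
rewrite (sum_fibers h (fun p s => \sum_t \sum_(q | h q == t) _)).
apply: eq_bigr => p _; rewrite (sum_fibers h (fun q t => _ * M (h p) t * _)).
by apply: eq_bigr => q _; rewrite rmorphM /=; ring.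
Qed.

Lemma psd_sum (T J : finType) (M : J -> op R T) :
  (forall j, psd (M j)) -> psd (fun p q => \sum_(j : J) M j p q).
Proof.
move=> psdM v; under eq_bigr => s _ do under eq_bigr => t _ do
  rewrite mulr_sumr mulr_suml.
under eq_bigr => s _ do rewrite exchange_big /=.
by rewrite exchange_big /=; apply: sumr_ge0 => j _; exact: psdM.
Qed.

Lemma psd_scale (T : finType) (M : op R T) (a : C) :
  0 <= a -> psd M -> psd (fun p q => a * M p q).
Proof.
move=> a_ge0 psdM v /=.
have e s t : (v s)^* * (a * M s t) * v t = a * ((v s)^* * M s t * v t) by ring.
under eq_bigr => s _ do under eq_bigr => t _ do rewrite e.
under eq_bigr => s _ do rewrite -mulr_sumr.
by rewrite -mulr_sumr mulr_ge0 //; exact: psdM.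
Qed.

Lemma psd_rank1 (T : finType) (c : T -> C) : psd (fun p q => (c p)^* * c q).
Proof.
move=> v /=; have e s t : (v s)^* * ((c s)^* * c t) * v t = (c s * v s)^* * (c t * v t).
  by rewrite rmorphM /=; ring.
under eq_bigr => s _ do under eq_bigr => t _ do rewrite e.
under eq_bigr => s _ do rewrite -mulr_sumr.
by rewrite -mulr_suml -rmorph_sum mulrC mul_conjC_ge0.
Qed.

Lemma psd_diag_ge0 (T : finType) (M : op R T) a : psd M -> 0 <= M a a.
Proof.
move=> psdM; have := psdM (fun s => (s == a)%:R); congr (0 <= _).
under eq_bigr => s _ do under eq_bigr => t _ do rewrite conjC_nat mulrC.
by under eq_bigr => s _ do rewrite sum_deltar; rewrite sum_deltar.
Qed.

Lemma psd_offdiag_form (T : finType) (M : op R T) a b :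
  psd M -> a != b -> M a a = 0 -> M b b = 0 ->
  forall t : C, 0 <= t^* * M b a + t * M a b.
Proof.
move=> psdM nab Maa Mbb t; pose v s := (s == a)%:R + t * (s == b)%:R.
have v0 s : s != a -> s != b -> v s = 0.
  by rewrite /v => /negPf -> /negPf ->; rewrite mulr0 addr0.
have [va vb] : v a = 1 /\ v b = t.
  by rewrite /v !eqxx (negPf nab) eq_sym (negPf nab) mulr0 mulr1 addr0 add0r.
have sum2 (F : T -> C) : (forall s, s != a -> s != b -> F s = 0) ->
    \sum_s F s = F a + F b.
  move=> F0; rewrite (bigD1 a) //= (bigD1 b) 1?eq_sym //= big1 ?addr0 ?addrA //.
  by move=> s /andP[sb sa]; apply: F0.
have := psdM v; congr (0 <= _).
rewrite sum2 => [|s sa sb]; last by rewrite big1 // => u _; rewrite (v0 s) // rmorph0 !mul0r.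
rewrite !sum2 => [|s sa sb|s sa sb]; try by rewrite (v0 s) // mulr0.
by rewrite va vb Maa Mbb rmorph1; ring.
Qed.

Lemma psd_offdiag0 (T : finType) (M : op R T) a b :
  psd M -> M a a = 0 -> M b b = 0 -> M a b = 0.
Proof.
move=> psdM Maa Mbb; have [-> //|nab] := eqVneq a b.
have form := psd_offdiag_form psdM nab Maa Mbb.
have eq0_ge0_le0 (z : C) : 0 <= z -> 0 <= - z -> z = 0.
  by move=> z_ge0 z_le0; apply/eqP; rewrite eq_le z_ge0 andbT -oppr_ge0.
have sym : M b a + M a b = 0.
  apply: eq0_ge0_le0; first by have := form 1; rewrite rmorph1 !mul1r.
  have -> : - (M b a + M a b) = (-1)^* * M b a + (-1) * M a b.
    by rewrite rmorphN rmorph1; ring.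
  exact: form.
pose j : C := 'i; have conjj : j^* = - j by rewrite conjCi.
have skew : j * (M a b - M b a) = 0.
  apply: eq0_ge0_le0.
    have -> : j * (M a b - M b a) = j^* * M b a + j * M a b by rewrite conjj; ring.
    exact: form.
  have -> : - (j * (M a b - M b a)) = j^*^* * M b a + j^* * M a b.
    by rewrite conjCK conjj; ring.
  exact: form.
move/eqP: skew; rewrite mulf_eq0 (negbTE (neq0Ci _ : j != 0)) subr_eq0 => /eqP eab.
have /eqP : M a b *+ 2 = 0 by rewrite mulr2n {1}eab.
by rewrite mulrn_eq0 => /eqP.
Qed.

Lemma cp_psd (I O : finType) (L : op R I -> op R O) :
  cp L -> forall x, psd x -> psd (L x).
Proof.
move=> cpL x psdx.
have psd1 : psd (fun p q : 'I_1 * I => x p.2 q.2).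
  by apply: psd_ext (psd_pullback snd (fun _ => 1) psdx) => p q; rewrite rmorph1 mul1r mulr1.
apply: psd_ext (psd_pullback (fun o => (ord0, o)) (fun _ => 1) (cpL 1%N _ psd1)) => p q.
by rewrite rmorph1 mul1r mulr1.
Qed.

Lemma ketbra_density (T : finType) (y : T) : density (ketbra y y).
Proof.
split; first by apply: psd_ext (psd_rank1 (fun p => ((p == y)%:R : C))) => p q; rewrite conjC_nat.
by rewrite /mtrace /ketbra sum_deltar eqxx.
Qed.

End Operators.
Arguments ketbra {R T} y y'.
Arguments ketbra_density {R T} y.

(** * Channels *)

Section Channels.
Variable R : realType.
Local Notation C := R[i].

Lemma cp_sum (I O J : finType) (L : J -> op R I -> op R O) :
  (forall j, cp (L j)) -> cp (fun rho o o' => \sum_(j : J) L j rho o o').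
Proof. by move=> cpL k s psds; apply: psd_sum => j; exact: cpL. Qed.

Lemma cp_scale (I O : finType) (L : op R I -> op R O) (c : C) :
  0 <= c -> cp L -> cp (fun rho o o' => c * L rho o o').
Proof. by move=> c_ge0 cpL k s psds; exact: psd_scale c_ge0 (cpL k s psds). Qed.

Lemma cp_trace0 (d : nat) (O : finType) (L : op R 'I_d -> op R O) :
  linmap L -> cp L -> (forall x, mtrace (L (ketbra x x)) = 0) ->
  forall s o o', L s o o' = 0.
Proof.
move=> linL cpL tr0 s o o'.
have choi : psd (fun p q : 'I_d * O => L (ketbra p.1 q.1) p.2 q.2).
  have psd_max : psd (fun p q : 'I_d * 'I_d => (p.1 == p.2)%:R * (q.1 == q.2)%:R : C).
    by apply: psd_ext (psd_rank1 (fun p : 'I_d * 'I_d => ((p.1 == p.2)%:R : C))) => p q;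
       rewrite conjC_nat.
  apply: psd_ext (cpL d _ psd_max) => p q; apply: opmap_ext => i j.
  by rewrite /ketbra /= ![(_ == p.1)]eq_sym ![(_ == q.1)]eq_sym.
have diag0 x a : L (ketbra x x) a a = 0.
  apply: (psumr_eq0P _ (tr0 x)) => // b _.
  exact: (psd_diag_ge0 (x, b) choi).
rewrite linmap_ketbra_expand //; apply: big1 => k _; apply: big1 => l _.
by rewrite (@psd_offdiag0 _ _ _ (k, o) (l, o') choi (diag0 k o) (diag0 l o')) mulr0.
Qed.

Section ChannelProperties.
Variables (dI dO : nat) (tI tO : systype) (L : op R 'I_dI -> op R 'I_dO).
Hypothesis chL : channel tI tO L.

Lemma channel_lin : linmap L. Proof. by case: chL. Qed.
Lemma channel_cp : cp L. Proof. by case: chL => _ []. Qed.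
Lemma channel_tp rho : density rho -> mtrace (L rho) = 1.
Proof. by case: chL => _ [_ [tp _]]; exact: tp. Qed.
Lemma channel_cl_in : tI = SysC -> cl_in id L. Proof. by case: chL => _ [_ [_ []]]. Qed.
Lemma channel_cl_out : tO = SysC -> cl_out id L. Proof. by case: chL => _ [_ [_ []]]. Qed.

End ChannelProperties.

Lemma classical_channel_ketbra (dI dO : nat) (L : op R 'I_dI -> op R 'I_dO) y y' b b' :
  channel SysC SysC L ->
  L (ketbra y y') b b' = (y == y')%:R * ((b == b')%:R * L (ketbra y y) b b).
Proof.
move=> chL; have [<-|ny] := eqVneq y y'; last first.
  rewrite mul0r; apply: (channel_cl_in chL erefl ny) => x x'; rewrite /ketbra.
  by have [->|] := eqVneq x y; have [->|] := eqVneq x' y'; rewrite ?mulr0 ?mul0r ?eqxx.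
have [<-|nb] := eqVneq b b'; first by rewrite !mul1r.
by rewrite mul0r mulr0; apply: (channel_cl_out chL erefl).
Qed.

Definition prep_channel (dI dO : nat) (a0 : 'I_dO) : op R 'I_dI -> op R 'I_dO :=
  fun s a a' => mtrace s * ketbra a0 a0 a a'.

Lemma channel_prep (dI dO : nat) (tI tO : systype) (a0 : 'I_dO) :
  channel tI tO (@prep_channel dI dO a0).
Proof.
rewrite /prep_channel; split.
  by move=> c x y o o'; rewrite /mtrace big_split /= -mulr_sumr; ring.
split.
  move=> k s psds; have := psd_sum (fun x : 'I_dI =>
    psd_pullback (fun p : 'I_k * 'I_dO => (p.1, x)) (fun p => (p.2 == a0)%:R) psds).
  apply: psd_ext => p q; rewrite /mtrace /ketbra mulr_suml; apply: eq_bigr => x _.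
  by rewrite conjC_nat; ring.
split.
  move=> s [_ tr1]; rewrite {1}/mtrace /= tr1.
  by under eq_bigr => a _ do rewrite mul1r; rewrite /ketbra sum_deltar eqxx.
split.
  move=> _ i j nij s supp o o'; rewrite /mtrace big1 ?mul0r // => x _.
  exact: (offblock_diag0 nij supp).
move=> _ rho o o' /= /negPf no; rewrite /ketbra.
have [eo|_] := eqVneq o a0; last by rewrite /= mulr0n mul0r mulr0.
by rewrite -eo [o' == o]eq_sym no /= mulr0n !mulr0.
Qed.

Definition det_channel (dI dO : nat) (g : 'I_dI -> 'I_dO) : op R 'I_dI -> op R 'I_dO :=
  fun M b b' => (b == b')%:R * \sum_(u : 'I_dI) (g u == b)%:R * M u u.

Lemma channel_det (dI dO : nat) (g : 'I_dI -> 'I_dO) : channel SysC SysC (det_channel g).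
Proof.
rewrite /det_channel; split.
  move=> c x y o o'; rewrite mulrCA -mulrDr; congr (_ * _).
  by rewrite mulr_sumr -big_split; apply: eq_bigr => u _ /=; ring.
split.
  move=> k s psds; have := psd_sum (fun u : 'I_dI =>
    psd_pullback (fun p : 'I_k * 'I_dO => (p.1, u)) (fun p => (g u == p.2)%:R) psds).
  apply: psd_ext => p q; rewrite mulr_sumr; apply: eq_bigr => u _ /=; rewrite conjC_nat.
  by have [<-|] := eqVneq (g u) p.2; rewrite ?mul0r ?mulr0 // mul1r eq_sym mulrC.
split.
  move=> rho [_ tr1]; rewrite /mtrace; under eq_bigr => b _ do rewrite eqxx mul1r.
  rewrite exchange_big -[RHS]tr1; apply: eq_bigr => u _ /=.
  by rewrite sum_deltal.
split.
  move=> _ i j nij rho supp o o'; rewrite big1 ?mulr0 // => u _.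
  by rewrite (offblock_diag0 nij supp (x := u) (x' := u)) ?mulr0.
by move=> _ rho o o' /negPf ->; rewrite mul0r.
Qed.

Lemma det_channel_ketbra (dI dO : nat) (g : 'I_dI -> 'I_dO) y y' b b' :
  det_channel g (ketbra y y') b b' = (b == b')%:R * ((g y == b)%:R * (y == y')%:R).
Proof.
rewrite /det_channel /ketbra; congr (_ * _).
under eq_bigr => u _ do rewrite mulrCA.
by rewrite sum_deltar.
Qed.

Definition alice_slice (T U : finType) (rho : op R (T * U)%type) (y : U) : op R T :=
  fun x x' => rho (x, y) (x', y).

Lemma tensor_map_classical (dX dY dA dB : nat) (RA : op R 'I_dX -> op R 'I_dA)
    (RB : op R 'I_dY -> op R 'I_dB) rho o o' :
  channel SysC SysC RB ->
  tensor_map RA RB rho o o' =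
  (o.2 == o'.2)%:R * \sum_(y : 'I_dY) RB (ketbra y y) o.2 o.2 * RA (alice_slice rho y) o.1 o'.1.
Proof.
move=> chB; rewrite /tensor_map mulr_sumr; apply: eq_bigr => y _.
under eq_bigr => y' _ do rewrite (classical_channel_ketbra _ _ _ _ chB) mulrCA.
by rewrite sum_deltal mulrCA; congr (_ * _); exact: mulrC.
Qed.

Lemma losr_free_fin (dX dY dA dB : nat) (tX tY tA tB : systype)
    (L : op R ('I_dX * 'I_dY)%type -> op R ('I_dA * 'I_dB)%type)
    (J : finType) (p : J -> C) (RA : J -> op R 'I_dX -> op R 'I_dA)
    (RB : J -> op R 'I_dY -> op R 'I_dB) :
  (forall j, 0 <= p j) -> \sum_j p j = 1 ->
  (forall j, channel tX tA (RA j)) -> (forall j, channel tY tB (RB j)) ->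
  (forall rho o o', L rho o o' = \sum_j p j * tensor_map (RA j) (RB j) rho o o') ->
  losr_free tX tY tA tB L.
Proof.
move=> p_ge0 p_sum chA chB decL.
exists #|J|, (fun i => p (enum_val i)), (fun i => RA (enum_val i)), (fun i => RB (enum_val i)).
split=> [//|]; split; first by rewrite -big_enum_val.
split=> [//|]; split=> [//|].
move=> rho o o'; pose F j := p j * tensor_map (RA j) (RB j) rho o o'.
by rewrite decL (eq_bigr (fun i => F (enum_val i))) // -big_enum_val.
Qed.

End Channels.
Arguments prep_channel {R dI dO} a0 s.
Arguments det_channel {R dI dO} g M.
Arguments alice_slice {R T U} rho y.

(** * A symmetric extension yields an LOSR decomposition *)

Section ExtensionToLOSR.
Variables (R : realType) (dX dA dB n : nat) (tX tA : systype).
Hypotheses (pX : (0 < dX)%N) (pA : (0 < dA)%N) (pn : (0 < n)%N).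
Variable L : op R ('I_dX * 'I_n)%type -> op R ('I_dA * 'I_dB)%type.
Variable E : op R ('I_dX * {ffun 'I_n -> 'I_n})%type ->
             op R ('I_dA * {ffun 'I_n -> 'I_dB})%type.
Hypothesis resL : resource tX SysC tA SysC L.
Hypothesis extE : sym_ext tX SysC tA SysC (Ordinal pn) L E.
Local Notation C := R[i].
Local Notation k0 := (Ordinal pn).
Local Notation outs := {ffun 'I_n -> 'I_dB}.

Lemma L_lin : linmap L. Proof. by case: resL. Qed.
Lemma L_clY : cl_in snd L.
Proof. by case: resL => _ [_ [_ [_ [_ [_ [clY _]]]]]]; exact: clY. Qed.
Lemma L_clB : cl_out snd L.
Proof. by case: resL => _ [_ [_ [_ [_ [_ [_ [_ clB]]]]]]]; exact: clB. Qed.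

Lemma E_lin : linmap E. Proof. by case: extE. Qed.
Lemma E_cp : cp E. Proof. by case: extE => _ []. Qed.
Lemma E_tp xi psi : density xi -> (forall k, density (psi k)) ->
  mtrace (E (prod_in xi psi)) = 1.
Proof. by case: extE => _ [_ [tp _]]; exact: tp. Qed.
Lemma E_ns (ka : bool) (K : {set 'I_n}) xi xi' psi psi' :
  density xi -> density xi' -> (forall k, density (psi k)) -> (forall k, density (psi' k)) ->
  (ka -> xi =2 xi') -> (forall k, k \in K -> psi k =2 psi' k) ->
  red ka K (E (prod_in xi psi)) =2 red ka K (E (prod_in xi' psi')).
Proof. by case: extE => _ [_ [_ [ns _]]]; exact: ns. Qed.
Lemma E_perm (s : {perm 'I_n}) rho o o' :
  E (fun x x' => rho (pidx s x) (pidx s x')) o o' = E rho (pidx s o) (pidx s o').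
Proof. by case: extE => _ [_ [_ [_ [perm _]]]]; exact: perm. Qed.
Lemma E_clX : tX = SysC -> cl_in fst E. Proof. by case: extE => _ [_ [_ [_ [_ []]]]]. Qed.
Lemma E_clA : tA = SysC -> cl_out fst E. Proof. by case: extE => _ [_ [_ [_ [_ [_ []]]]]]. Qed.
Lemma E_red rho psi : (forall k, k != k0 -> density (psi k)) -> forall o o' : 'I_dA * 'I_dB,
  \sum_(g : outs | g k0 == o.2) E (ext_in k0 rho psi) (o.1, g) (o'.1, upd g k0 o'.2) = L rho o o'.
Proof. by case: extE => _ [_ [_ [_ [_ [_ [_ [_ [_ red]]]]]]]]; exact: red. Qed.

Definition id_inputs : {ffun 'I_n -> 'I_n} := [ffun k => k].

Definition probe (s : op R 'I_dX) : op R ('I_dX * {ffun 'I_n -> 'I_n})%type :=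
  fun x x' => s x.1 x'.1 * (x.2 == id_inputs)%:R * (x'.2 == id_inputs)%:R.

Definition cond_out (g : outs) (s : op R 'I_dX) : op R 'I_dA :=
  fun a a' => E (probe s) (a, g) (a', g).

Definition outcome_prob (g : outs) : C := mtrace (cond_out g (ketbra (Ordinal pX) (Ordinal pX))).

Lemma prod_in_probe s : prod_in s (fun k => ketbra k k) = probe s.
Proof.
apply: op_ext => x x'; rewrite /prod_in /probe /ketbra -mulrA big_split /=.
by congr (_ * (_ * _)); rewrite -prod_delta; apply: eq_bigr => k _; rewrite ffunE.
Qed.

Lemma mtrace_cond_out g s : density s -> mtrace (cond_out g s) = outcome_prob g.
Proof.
move=> dens_s; have := E_ns (ka := false) (K := setT) dens_s (ketbra_density (Ordinal pX))
  (fun k => ketbra_density k) (fun k => ketbra_density k) (fun f => False_ind _ (notF f))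
  (fun _ _ _ _ => erefl) (Ordinal pA, g) (Ordinal pA, g).
by rewrite !red_trace_alice !prod_in_probe.
Qed.

Lemma outcome_prob_sum : \sum_(g : outs) outcome_prob g = 1.
Proof.
rewrite -(E_tp (ketbra_density (Ordinal pX)) (fun k => ketbra_density k)) prod_in_probe.
by rewrite /outcome_prob /mtrace exchange_big pair_big /=; apply: eq_bigr => -[].
Qed.

Lemma cond_out_lin g : linmap (cond_out g).
Proof.
by move=> c x y a a'; rewrite /cond_out -E_lin; apply: opmap_ext => p q; rewrite /probe; ring.
Qed.

Lemma cond_out_cp g : cp (cond_out g).
Proof.
move=> k s psds; pose s' (p q : 'I_k * ('I_dX * {ffun 'I_n -> 'I_n})) :=
  ((p.2.2 == id_inputs)%:R)^* * s (p.1, p.2.1) (q.1, q.2.1) * (q.2.2 == id_inputs)%:R.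
have psds' : psd s' := psd_pullback (fun p => (p.1, p.2.1)) _ psds.
apply: psd_ext (psd_pullback (fun p : 'I_k * 'I_dA => (p.1, (p.2, g))) (fun _ => 1) (E_cp psds')).
move=> p q; rewrite rmorph1 mul1r mulr1; apply: opmap_ext => x x'.
by rewrite /s' /probe conjC_nat; ring.
Qed.

Lemma outcome_prob_ge0 g : 0 <= outcome_prob g.
Proof.
apply: sumr_ge0 => a _; apply: psd_diag_ge0.
exact: cp_psd (@cond_out_cp g) _ (ketbra_density _).1.
Qed.

Lemma cond_out_null g : outcome_prob g = 0 -> forall s a a', cond_out g s a a' = 0.
Proof.
move=> P0; apply: cp_trace0 (@cond_out_lin g) (@cond_out_cp g) _ => x.
by rewrite mtrace_cond_out //; exact: ketbra_density.
Qed.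

(* Conditioning on a null outcome is meaningless; any channel will do there. *)
Definition alice_channel (g : outs) : op R 'I_dX -> op R 'I_dA :=
  if outcome_prob g == 0 then prep_channel (Ordinal pA)
  else fun s a a' => (outcome_prob g)^-1 * cond_out g s a a'.

Lemma channel_alice g : channel tX tA (alice_channel g).
Proof.
rewrite /alice_channel; have [_|P0] := eqVneq (outcome_prob g) 0; first exact: channel_prep.
split; first by move=> c x y a a'; rewrite cond_out_lin mulrDr mulrCA.
split; first by apply: cp_scale (@cond_out_cp g); rewrite invr_ge0 outcome_prob_ge0.
split.
  move=> rho dens; transitivity ((outcome_prob g)^-1 * mtrace (cond_out g rho)).
    by rewrite /mtrace mulr_sumr.
  by rewrite mtrace_cond_out // mulVf.
split.
  move=> clX i j nij s supp a a'; rewrite /cond_out (E_clX clX nij (rho := probe s)) ?mulr0 //.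
  move=> x x'; rewrite /probe => ne0; apply: supp; apply: contraNneq ne0 => ->.
  by rewrite !mul0r.
by move=> clA s a a' na; rewrite /cond_out (E_clA clA (probe s)) ?mulr0.
Qed.

Lemma outcome_prob_alice g s a a' :
  outcome_prob g * alice_channel g s a a' = cond_out g s a a'.
Proof.
rewrite /alice_channel; have [P0|P0] := eqVneq (outcome_prob g) 0.
  by rewrite P0 mul0r cond_out_null.
by rewrite mulrA mulfV ?mul1r.
Qed.

Lemma relabel_id_inputs (y : 'I_n) (f : {ffun 'I_n -> 'I_n}) :
  (([ffun k => f (tperm k0 y k)] == id_inputs)%:R : C) =
  (f k0 == y)%:R * \prod_(k | k != k0) (f k == tperm k0 y k)%:R.
Proof.
rewrite -prod_delta (reindex_inj (@perm_inj _ (tperm k0 y))) /=.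
rewrite (bigD1 k0) //= ffunE tpermK /id_inputs ffunE tpermL; congr (_ * _).
by apply: eq_bigr => k _; rewrite !ffunE tpermK.
Qed.

Lemma ext_in_bob_block rho (y : 'I_n) :
  ext_in k0 (fun p q => (p.2 == y)%:R * (q.2 == y)%:R * rho p q)
    (fun k => ketbra (tperm k0 y k) (tperm k0 y k))
  =2 (fun x x' => probe (alice_slice rho y) (pidx (tperm k0 y) x) (pidx (tperm k0 y) x')).
Proof.
move=> x x'; rewrite /ext_in /probe /pidx /= !relabel_id_inputs /ketbra big_split /=.
have [ex|_] := eqVneq (x.2 k0) y; last by rewrite /= mulr0n !(mul0r, mulr0).
have [ex'|_] := eqVneq (x'.2 k0) y; last by rewrite /= mulr0n !(mul0r, mulr0).
by rewrite /alice_slice ex ex'; ring.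
Qed.

Lemma L_bob_block rho y o o' :
  L (fun p q => (p.2 == y)%:R * (q.2 == y)%:R * rho p q) o o' =
  (o.2 == o'.2)%:R * \sum_(g : outs | g y == o.2) cond_out g (alice_slice rho y) o.1 o'.1.
Proof.
have [e|ne] := eqVneq o.2 o'.2; last by rewrite mul0r; apply: L_clB.
rewrite mul1r -(E_red _ (fun k _ => ketbra_density (tperm k0 y k))).
pose relabel (g : outs) : outs := [ffun k => g (tperm k0 y k)].
have relabelK : involutive relabel by move=> g; apply/ffunP => k; rewrite !ffunE tpermK.
rewrite (reindex_inj (inv_inj relabelK)) /=.
apply: eq_big => [g|g /eqP gk0]; first by rewrite ffunE tpermL.
have -> : upd (relabel g) k0 o'.2 = relabel g.
  by apply/ffunP => k; rewrite !ffunE; case: eqP => // ->; rewrite -e -gk0 ffunE.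
rewrite (opmap_ext _ _ _ (ext_in_bob_block rho y)) E_perm /pidx /= /cond_out.
by congr (E _ (_, _) (_, _)); rewrite -[RHS]relabelK.
Qed.

Lemma L_decomposition rho o o' : L rho o o' =
  \sum_(g : outs) outcome_prob g * tensor_map (alice_channel g) (det_channel g) rho o o'.
Proof.
rewrite (cl_in_diag_blocks L_lin L_clY).
under eq_bigr => y _ do rewrite L_bob_block big_mkcond /= mulr_sumr.
rewrite exchange_big /=; apply: eq_bigr => g _.
rewrite tensor_map_classical; last exact: channel_det.
rewrite mulrCA -mulr_sumr; congr (_ * _); rewrite mulr_sumr; apply: eq_bigr => y _.
rewrite det_channel_ketbra !eqxx /= !mulr1n mul1r mulr1 mulrCA outcome_prob_alice.
by rewrite -mulrb mulr_natl.
Qed.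

Lemma losr_free_of_sym_ext : losr_free tX SysC tA SysC L.
Proof.
apply: (losr_free_fin (RA := alice_channel) (RB := fun g : outs => det_channel g))
  outcome_prob_ge0 outcome_prob_sum channel_alice _ L_decomposition.
by move=> g; exact: channel_det.
Qed.

End ExtensionToLOSR.

(** * An LOSR decomposition yields a symmetric extension *)

Section LOSRToExtension.
Variables (R : realType) (dX dA dB n : nat) (tX tA : systype).
Hypothesis pn : (0 < n)%N.
Variable L : op R ('I_dX * 'I_n)%type -> op R ('I_dA * 'I_dB)%type.
Variables (m : nat) (p : 'I_m -> R[i]) (RA : 'I_m -> op R 'I_dX -> op R 'I_dA)
  (RB : 'I_m -> op R 'I_n -> op R 'I_dB).
Hypotheses (p_ge0 : forall i, 0 <= p i) (p_sum : \sum_(i < m) p i = 1)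
  (chA : forall i, channel tX tA (RA i)) (chB : forall i, channel SysC SysC (RB i))
  (decL : forall rho o o', L rho o o' = \sum_(i < m) p i * tensor_map (RA i) (RB i) rho o o').
Local Notation C := R[i].
Local Notation k0 := (Ordinal pn).
Local Notation ins := {ffun 'I_n -> 'I_n}.
Local Notation outs := {ffun 'I_n -> 'I_dB}.

Definition bob_prob i (b : 'I_dB) (y : 'I_n) : C := RB i (ketbra y y) b b.

Lemma bob_prob_ge0 i b y : 0 <= bob_prob i b y.
Proof. exact: psd_diag_ge0 (cp_psd (channel_cp (chB i)) (ketbra_density y).1). Qed.

Lemma bob_prob_sum i y : \sum_(b : 'I_dB) bob_prob i b y = 1.
Proof. by rewrite -[RHS](channel_tp (chB i) (ketbra_density y)). Qed.

Definition losr_ext (rho : op R ('I_dX * ins)%type) : op R ('I_dA * outs)%type :=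
  fun o o' => (o.2 == o'.2)%:R * \sum_(i < m) p i *
    \sum_(h : ins) (\prod_(k < n) bob_prob i (o.2 k) (h k)) * RA i (alice_slice rho h) o.1 o'.1.

Lemma losr_ext_lin : linmap losr_ext.
Proof.
move=> c x y o o'; rewrite /losr_ext mulrCA -mulrDr; congr (_ * _).
rewrite mulr_sumr -big_split; apply: eq_bigr => i _ /=.
rewrite mulrCA -mulrDr; congr (_ * _).
rewrite mulr_sumr -big_split; apply: eq_bigr => h _ /=.
by rewrite (channel_lin (chA i) c (alice_slice x h) (alice_slice y h)); ring.
Qed.

Definition losr_piece i (h : ins) (f : outs) (rho : op R ('I_dX * ins)%type) :
    op R ('I_dA * outs)%type :=
  fun o o' => ketbra f f o.2 o'.2 * RA i (alice_slice rho h) o.1 o'.1.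

Lemma losr_piece_cp i h f : cp (losr_piece i h f).
Proof.
move=> k s psds.
have psd_h : psd (fun P Q : 'I_k * 'I_dX => s (P.1, (P.2, h)) (Q.1, (Q.2, h))).
  apply: psd_ext (psd_pullback (fun P => (P.1, (P.2, h))) (fun _ => 1) psds) => P Q.
  by rewrite rmorph1 mul1r mulr1.
apply: psd_ext (psd_pullback (fun P : 'I_k * ('I_dA * outs) => (P.1, P.2.1))
  (fun P => (P.2.2 == f)%:R) (channel_cp (chA i) psd_h)) => P Q.
by rewrite /losr_piece /ketbra conjC_nat; ring.
Qed.

Lemma losr_ext_pieces rho o o' : losr_ext rho o o' = \sum_(i < m) \sum_(h : ins) \sum_(f : outs)
  (p i * \prod_(k < n) bob_prob i (f k) (h k)) * losr_piece i h f rho o o'.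
Proof.
rewrite /losr_ext /losr_piece /ketbra mulr_sumr; apply: eq_bigr => i _.
rewrite mulrCA !mulr_sumr; apply: eq_bigr => h _.
rewrite (eq_bigr (fun f : outs => (o.2 == f)%:R * (p i * ((o'.2 == f)%:R *
  (\prod_k bob_prob i (f k) (h k) * RA i (alice_slice rho h) o.1 o'.1))))) => [|f _]; last by ring.
by rewrite sum_deltal eq_sym.
Qed.

Lemma losr_ext_cp : cp losr_ext.
Proof.
have -> : losr_ext = fun rho o o' => \sum_(i < m) \sum_(h : ins) \sum_(f : outs)
    (p i * \prod_(k < n) bob_prob i (f k) (h k)) * losr_piece i h f rho o o'.
  by do 3!apply: boolp.funext => ?; exact: losr_ext_pieces.
apply: cp_sum => i; apply: cp_sum => h; apply: cp_sum => f.
apply: cp_scale (losr_piece_cp i h f).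
by rewrite mulr_ge0 // prodr_ge0 // => k _; exact: bob_prob_ge0.
Qed.

Lemma losr_ext_clX : tX = SysC -> cl_in fst losr_ext.
Proof.
move=> clX y y' nyy' rho supp o o'; rewrite /losr_ext big1 ?mulr0 // => i _.
rewrite big1 ?mulr0 // => h _; rewrite (channel_cl_in (chA i) clX nyy') ?mulr0 //.
by move=> x x' /(supp (x, h) (x', h)).
Qed.

Lemma losr_ext_clA : tA = SysC -> cl_out fst losr_ext.
Proof.
move=> clA rho o o' no; rewrite /losr_ext big1 ?mulr0 // => i _.
by rewrite big1 ?mulr0 // => h _; rewrite (channel_cl_out (chA i) clA) ?mulr0.
Qed.

Lemma losr_ext_clY k : cl_in (fun x : 'I_dX * ins => x.2 k) losr_ext.
Proof.
move=> y y' nyy' rho supp o o'; rewrite /losr_ext big1 ?mulr0 // => i _.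
rewrite big1 ?mulr0 // => h _.
have slice0 : alice_slice rho h =2 (fun _ _ => 0).
  by move=> x x'; exact: (offblock_diag0 nyy' supp).
by rewrite (opmap_ext _ _ _ slice0) (linmap0 (channel_lin (chA i))) mulr0.
Qed.

Lemma losr_ext_clB k : cl_out (fun o : 'I_dA * outs => o.2 k) losr_ext.
Proof.
move=> rho o o' no; rewrite /losr_ext.
have [e|_] := eqVneq o.2 o'.2; first by rewrite e eqxx in no.
by rewrite /= mulr0n mul0r.
Qed.

Lemma losr_ext_perm (s : {perm 'I_n}) rho o o' :
  losr_ext (fun x x' => rho (pidx s x) (pidx s x')) o o' = losr_ext rho (pidx s o) (pidx s o').
Proof.
rewrite /losr_ext /pidx /alice_slice /=.
have -> : ([ffun k => o.2 (s k)] == [ffun k => o'.2 (s k)]) = (o.2 == o'.2).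
  apply/eqP/eqP => [/ffunP e|-> //]; apply/ffunP => k.
  by move: (e ((s^-1)%g k)); rewrite !ffunE permKV.
congr (_ * _); apply: eq_bigr => i _; congr (_ * _).
pose relabel (h : ins) : ins := [ffun k => h ((s^-1)%g k)].
have relabel_inj : injective relabel.
  by move=> h1 h2 /ffunP e; apply/ffunP => k; move: (e (s k)); rewrite !ffunE permK.
rewrite (reindex_inj relabel_inj) /=; apply: eq_bigr => h _.
have -> : [ffun k => relabel h (s k)] = h by apply/ffunP => k; rewrite !ffunE permK.
congr (_ * _); rewrite (reindex_inj (@perm_inj _ s)) /=.
by apply: eq_bigr => k _; rewrite !ffunE permK.
Qed.

Definition bob_marg i (psi : 'I_n -> op R 'I_n) k (b : 'I_dB) : C :=
  \sum_(y : 'I_n) bob_prob i b y * psi k y y.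

Lemma bob_marg_sum i psi k : density (psi k) -> \sum_(b : 'I_dB) bob_marg i psi k b = 1.
Proof.
move=> [_ tr1]; rewrite /bob_marg exchange_big -tr1; apply: eq_bigr => y _ /=.
by rewrite -mulr_suml bob_prob_sum mul1r.
Qed.

Lemma losr_ext_prod_in xi psi o o' : losr_ext (prod_in xi psi) o o' =
  (o.2 == o'.2)%:R * \sum_(i < m) p i * (RA i xi o.1 o'.1 * \prod_(k < n) bob_marg i psi k (o.2 k)).
Proof.
rewrite /losr_ext; congr (_ * _); apply: eq_bigr => i _; congr (_ * _).
have slice h : RA i (alice_slice (prod_in xi psi) h) o.1 o'.1 =
    (\prod_(k < n) psi k (h k) (h k)) * RA i xi o.1 o'.1.
  by rewrite -(linmapZ (channel_lin (chA i))); apply: opmap_ext => x x'; rewrite mulrC.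
under eq_bigr => h _ do rewrite slice mulrA -big_split /= mulrC.
rewrite -mulr_sumr; congr (_ * _); rewrite /bob_marg bigA_distr_bigA /=.
by apply: eq_bigr => h _; apply: eq_bigr => k _.
Qed.

Lemma losr_ext_tp xi psi : density xi -> (forall k, density (psi k)) ->
  mtrace (losr_ext (prod_in xi psi)) = 1.
Proof.
move=> dens_xi dens_psi.
transitivity (\sum_(a : 'I_dA) \sum_(f : outs) losr_ext (prod_in xi psi) (a, f) (a, f)).
  by rewrite /mtrace pair_big /=; apply: eq_bigr => -[a f].
under eq_bigr => a _ do under eq_bigr => f _ do rewrite losr_ext_prod_in eqxx mul1r.
rewrite exchange_big /=; under eq_bigr => f _ do rewrite exchange_big /=.
rewrite exchange_big /= -[RHS]p_sum; apply: eq_bigr => i _.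
have trA : \sum_(a : 'I_dA) RA i xi a a = 1 := channel_tp (chA i) dens_xi.
under eq_bigr => f _ do rewrite -mulr_sumr -mulr_suml trA mul1r.
rewrite -mulr_sumr -[RHS]mulr1; congr (_ * _).
by rewrite -bigA_distr_bigA; apply: big1 => k _; exact: bob_marg_sum.
Qed.

Lemma sum_alice_red i (ka : bool) xi (o o' : 'I_dA) : density xi ->
  \sum_(a : 'I_dA | ka ==> (a == o)) RA i xi (if ka then o else a) (if ka then o' else a)
  = if ka then RA i xi o o' else 1.
Proof.
by case: ka => dens_xi /=; [rewrite (big_pred1 o) | rewrite -[RHS](channel_tp (chA i) dens_xi)].
Qed.

Lemma sum_bob_red i psi (K : {set 'I_n}) (o2 o2' : outs) : (forall k, density (psi k)) ->
  \sum_(f : outs | [forall k in K, f k == o2 k])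
     ([ffun k => if k \in K then o2 k else f k] ==
      [ffun k => if k \in K then o2' k else f k])%:R *
     \prod_(k < n) bob_marg i psi k ([ffun k => if k \in K then o2 k else f k] k)
  = \prod_(k < n) (if k \in K then (o2 k == o2' k)%:R * bob_marg i psi k (o2 k) else 1).
Proof.
move=> dens_psi; pose G k b := if k \in K
  then (b == o2 k)%:R * ((o2 k == o2' k)%:R * bob_marg i psi k (o2 k))
  else bob_marg i psi k b.
transitivity (\sum_(f : outs) \prod_k G k (f k)).
  rewrite big_mkcond /=; apply: eq_bigr => f _; rewrite -prod_delta -big_split /=.
  case: ifP => [/forallP agree|/negbT/forallPn [k]].
    apply: eq_bigr => k _; rewrite /G !ffunE; case: ifP => kK; last by rewrite eqxx mul1r.
    by move: (agree k); rewrite kK => /eqP ->; rewrite eqxx mul1r.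
  by rewrite negb_imply => /andP [kK nk]; rewrite (bigD1 k) //= /G kK (negPf nk) !mul0r.
rewrite -bigA_distr_bigA; apply: eq_bigr => k _; rewrite /G; case: ifP => kK.
  by rewrite sum_deltar.
exact: bob_marg_sum.
Qed.

Lemma red_losr_ext (ka : bool) (K : {set 'I_n}) xi psi o o' :
  density xi -> (forall k, density (psi k)) ->
  red ka K (losr_ext (prod_in xi psi)) o o' =
  \sum_(i < m) p i * ((if ka then RA i xi o.1 o'.1 else 1) *
     \prod_(k < n) (if k \in K then (o.2 k == o'.2 k)%:R * bob_marg i psi k (o.2 k) else 1)).
Proof.
move=> dens_xi dens_psi.
transitivity (\sum_(a : 'I_dA | ka ==> (a == o.1)) \sum_(f : outs | [forall k in K, f k == o.2 k])
    losr_ext (prod_in xi psi) (mix ka K o (a, f)) (mix ka K o' (a, f))).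
  by rewrite /red pair_big_dep /=; apply: eq_bigr => -[a f].
under eq_bigr => a _ do under eq_bigr => f _ do rewrite losr_ext_prod_in mulr_sumr.
under eq_bigr => a _ do rewrite exchange_big /=.
rewrite exchange_big /=; apply: eq_bigr => i _.
rewrite -(sum_alice_red i ka o.1 o'.1 dens_xi) -(sum_bob_red i K o.2 o'.2 dens_psi).
rewrite big_distrlr mulr_sumr; apply: eq_bigr => a _.
by rewrite mulr_sumr; apply: eq_bigr => f _ /=; ring.
Qed.

Lemma losr_ext_ns (ka : bool) (K : {set 'I_n}) xi xi' psi psi' :
  density xi -> density xi' -> (forall k, density (psi k)) -> (forall k, density (psi' k)) ->
  (ka -> xi =2 xi') -> (forall k, k \in K -> psi k =2 psi' k) ->
  red ka K (losr_ext (prod_in xi psi)) =2 red ka K (losr_ext (prod_in xi' psi')).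
Proof.
move=> dens_xi dens_xi' dens_psi dens_psi' exi epsi o o'; rewrite !red_losr_ext //.
apply: eq_bigr => i _; congr (_ * (_ * _)).
  by case: ka exi => // exi; apply: opmap_ext; exact: exi.
apply: eq_bigr => k _; case: ifP => // kK; congr (_ * _).
by apply: eq_bigr => y _; rewrite (epsi k kK).
Qed.

Lemma sum_bob_prob_fixed i (h : ins) b :
  \sum_(g : outs | g k0 == b) \prod_(k < n) bob_prob i (g k) (h k) = bob_prob i b (h k0).
Proof.
rewrite big_mkcond /= (eq_bigr (fun g : outs => (g k0 == b)%:R * bob_prob i (g k0) (h k0) *
  \prod_(k | k != k0) bob_prob i (g k) (h k))) => [|g _]; last first.
  by rewrite (bigD1 k0) //=; case: (g k0 == b); rewrite /= ?mulr1n ?mulr0n ?mul1r ?mul0r.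
rewrite (@sum_ffun_prod_except _ _ _ k0 (fun c => (c == b)%:R * bob_prob i c (h k0))
  (fun k c => bob_prob i c (h k))) => [|k _]; last exact: bob_prob_sum.
exact: sum_deltar.
Qed.

Lemma alice_slice_ext_in i rho psi (h : ins) o o' :
  RA i (alice_slice (ext_in k0 rho psi) h) o o' =
  (\prod_(k | k != k0) psi k (h k) (h k)) * RA i (alice_slice rho (h k0)) o o'.
Proof.
rewrite -(linmapZ (channel_lin (chA i))); apply: opmap_ext => x x'.
by rewrite /ext_in /alice_slice mulrC.
Qed.

Lemma losr_ext_red rho psi : (forall k, k != k0 -> density (psi k)) ->
  forall o o' : 'I_dA * 'I_dB,
  \sum_(g : outs | g k0 == o.2) losr_ext (ext_in k0 rho psi) (o.1, g) (o'.1, upd g k0 o'.2)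
  = L rho o o'.
Proof.
move=> dens_psi o o'; rewrite decL /losr_ext /=.
under eq_bigr => g gk0 do rewrite (upd_eq o'.2 (eqP gk0)).
rewrite -mulr_sumr exchange_big /= mulr_sumr; apply: eq_bigr => i _.
rewrite (tensor_map_classical _ _ _ _ (chB i)) mulrCA -mulr_sumr; congr (_ * (_ * _)).
under eq_bigr => g _ do under eq_bigr => h _ do rewrite alice_slice_ext_in.
rewrite exchange_big /=.
under eq_bigr => h _ do rewrite -mulr_suml sum_bob_prob_fixed mulrCA mulrC.
rewrite (@sum_ffun_prod_except _ _ _ k0
  (fun y => bob_prob i o.2 y * RA i (alice_slice rho y) o.1 o'.1) (fun k y => psi k y y)) //.
by move=> k nk; case: (dens_psi k nk).
Qed.

Lemma sym_ext_of_losr_free : has_sym_ext tX SysC tA SysC k0 L.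
Proof.
exists losr_ext; split; first exact: losr_ext_lin.
split; first exact: losr_ext_cp.
split; first exact: losr_ext_tp.
split; first exact: losr_ext_ns.
split; first exact: losr_ext_perm.
split; first exact: losr_ext_clX.
split; first exact: losr_ext_clA.
split; first by move=> k _; exact: losr_ext_clY.
split; first by move=> k _; exact: losr_ext_clB.
exact: losr_ext_red.
Qed.

End LOSRToExtension.

Theorem proposition9 (R : realType) (dX dA dB n : nat) (tX tA : systype)
  (hX : tX = SysI -> dX = 1%N) (hA : tA = SysI -> dA = 1%N)
  (pX : (0 < dX)%N) (pA : (0 < dA)%N) (pB : (0 < dB)%N) (pn : (0 < n)%N)
  (L : op R ('I_dX * 'I_n)%type -> op R ('I_dA * 'I_dB)%type) :
  resource tX SysC tA SysC L ->
  (has_sym_ext tX SysC tA SysC (Ordinal pn) L <-> losr_free tX SysC tA SysC L).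
Proof.
move=> resL; split=> [[E extE] | [m [p [RA [RB [p_ge0 [p_sum [chA [chB decL]]]]]]]]].
  exact: (@losr_free_of_sym_ext R dX dA dB n tX tA pX pA pn L E resL extE).
exact: (sym_ext_of_losr_free pn p_ge0 p_sum chA chB decL).
Qed.
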